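(* For $(x,a)\in\mathbb{R}\times\mathbb{R}_+$ define the operator $\widehat R_{\mathrm{Aff}}(x,a)$ on $\mathcal{S}(\mathbb{R}_+)$ by \[\widehat R_{\mathrm{Aff}}(x,a)\psi(r):=\frac{e^{2\pi i x v}\,v\,(1-e^{v})}{1+v-e^{v}}\,\psi\big(re^{-v}\big),\qquad v:=\lambda^{-1}\!\Big(\frac ra\Big),\ r>0\] (with the prefactor interpreted as its limit $2$ when $v=0$). Then for all $\psi,\phi\in\mathcal{S}(\mathbb{R}_+)$ and $(x,a)\in\mathbb{R}\times\mathbb{R}_+$, \[W_{\mathrm{Aff}}^{\psi,\phi}(x,a)=\big\langle\widehat R_{\mathrm{Aff}}(x,a)\psi,\phi\big\rangle_{L^2(\mathbb{R}_+)}.\]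
   Context: $L^2(\mathbb{R}_+)$ denotes $L^2(\mathbb{R}_+, a^{-1}\,da)$ with inner product $\langle\psi,\phi\rangle=\int_0^\infty\psi\overline\phi\,\frac{da}{a}$. $\mathcal{S}(\mathbb{R}_+)$ is the space of smooth $\psi:\mathbb{R}_+\to\mathbb{C}$ with $x\mapsto\psi(e^x)$ in $\mathcal{S}(\mathbb{R})$. $\lambda(u) := \frac{ue^u}{e^u-1}$ for $u\neq 0$, $\lambda(0):=1$; $\lambda$ is an increasing bijection $\mathbb{R}\to(0,\infty)$ with inverse $\lambda^{-1}$. Affine cross-Wigner transform: $W_{\mathrm{Aff}}^{\psi,\phi}(x,a) := \int_{-\infty}^{\infty}\psi(a\lambda(u))\overline{\phi(a\lambda(-u))}e^{-2\pi i x u}\,du$. *)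

From Stdlib Require Import Reals Lra ClassicalEpsilon.
Open Scope R_scope.

Definition Cx : Type := (R * R)%type.
Definition Cmul (z w : Cx) : Cx :=
  (fst z * fst w - snd z * snd w, fst z * snd w + snd z * fst w).
Definition Cconj (z : Cx) : Cx := (fst z, - snd z).
Definition Cscale (r : R) (z : Cx) : Cx := (r * fst z, r * snd z).
Definition Cexpi (t : R) : Cx := (cos t, sin t).

Definition Schwartz_R (g : R -> R) : Prop :=
  exists D : nat -> R -> R,
    (forall x, D 0%nat x = g x) /\
    (forall (n : nat) (x : R), derivable_pt_lim (D n) x (D (S n) x)) /\
    (forall k n : nat, exists M : R, forall x : R, Rabs (x ^ k * D n x) <= M).

(* S(R_+): psi : R_+ -> C (only values at positive reals matter),
   with x |-> psi (e^x) in S(R) (real and imaginary parts). *)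
Definition Schwartz_Rplus (psi : R -> Cx) : Prop :=
  Schwartz_R (fun x => fst (psi (exp x))) /\
  Schwartz_R (fun x => snd (psi (exp x))).

Definition lambda (u : R) : R :=
  if Req_EM_T u 0 then 1 else u * exp u / (exp u - 1).

(* inverse of lambda : R -> (0,oo) (meaningful for y > 0) *)
Definition lambda_inv (y : R) : R :=
  epsilon (inhabits 0) (fun u => lambda u = y).

Definition improper_int_R (f : R -> R) (L : R) : Prop :=
  (forall a b, a <= b -> inhabited (Riemann_integrable f a b)) /\
  (forall eps, 0 < eps -> exists M, 0 < M /\
     forall a b (pr : Riemann_integrable f a b),
       a <= - M -> M <= b -> Rabs (RiemannInt pr - L) < eps).

Definition improper_int_pos (f : R -> R) (L : R) : Prop :=
  (forall a b, 0 < a -> a <= b -> inhabited (Riemann_integrable f a b)) /\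
  (forall eps, 0 < eps -> exists d M, 0 < d /\ d < M /\
     forall a b (pr : Riemann_integrable f a b),
       0 < a -> a <= d -> M <= b -> Rabs (RiemannInt pr - L) < eps).

Definition Cimproper_int_R (f : R -> Cx) (L : Cx) : Prop :=
  improper_int_R (fun u => fst (f u)) (fst L) /\
  improper_int_R (fun u => snd (f u)) (snd L).

Definition Cimproper_int_pos (f : R -> Cx) (L : Cx) : Prop :=
  improper_int_pos (fun u => fst (f u)) (fst L) /\
  improper_int_pos (fun u => snd (f u)) (snd L).

Definition W_Aff_integrand (psi phi : R -> Cx) (x a : R) (u : R) : Cx :=
  Cmul (Cmul (psi (a * lambda u)) (Cconj (phi (a * lambda (- u)))))
       (Cexpi (- (2 * PI * x * u))).

Definition W_Aff_is (psi phi : R -> Cx) (x a : R) (L : Cx) : Prop :=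
  Cimproper_int_R (W_Aff_integrand psi phi x a) L.

Definition R_prefactor (v : R) : R :=
  if Req_EM_T v 0 then 2 else v * (1 - exp v) / (1 + v - exp v).

Definition R_Aff (x a : R) (psi : R -> Cx) (r : R) : Cx :=
  let v := lambda_inv (r / a) in
  Cscale (R_prefactor v) (Cmul (Cexpi (2 * PI * x * v)) (psi (r * exp (- v)))).

(* <f, g>_{L^2(R_+, da/a)} = L *)
Definition L2Rplus_inner_is (f g : R -> Cx) (L : Cx) : Prop :=
  Cimproper_int_pos (fun r => Cscale (/ r) (Cmul (f r) (Cconj (g r)))) L.

(* Substituting u = -v and r = a lambda(v) in the Wigner integral gives the inner-product
   integral: r e^(-v) = a lambda(-v) reproduces the second argument of psi, and since the
   prefactor of R_Aff equals lambda(v) / lambda'(v), the weight 1/r times the prefactor cancels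
   the Jacobian a lambda'(v).  Everything rests on lambda(u) = 1 / exprel(-u), where
   exprel(u) = (e^u - 1)/u is an entire positive function: this makes lambda a smooth increasing
   bijection onto (0, oo) and gives lambda(-w) <= 2 e^(-w/2).  Hence for |u| large one factor of
   the Wigner integrand is psi or phi at a point whose logarithm is below -|u|/4, where the
   Schwartz condition on x |-> psi(e^x) makes it O(1/u^2); so both improper integrals converge. *)

From Stdlib Require Import Reals Lra Psatz ClassicalEpsilon.
From Coquelicot Require Import Coquelicot.
Open Scope R_scope.

(** * The function exprel *)

(* [exprel u = (e^u - 1) / u], as an entire power series. *)
Definition exprel_coef (n : nat) : R := / INR (Factorial.fact (S n)).
Definition exprel (u : R) : R := PSeries exprel_coef u.
Definition Dexprel (u : R) : R := PSeries (PS_derive exprel_coef) u.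

Lemma CV_radius_exp_coef : CV_radius (fun n => / INR (Factorial.fact n)) = p_infty.
Proof.
  destruct (CV_radius _) as [r| |] eqn:E; try reflexivity; exfalso.
  - assert (Hout : Rbar_lt (CV_radius (fun n => / INR (Factorial.fact n))) (Rabs (Rabs r + 1))).
    { rewrite E, Rabs_pos_eq; simpl; pose proof (Rabs_pos r); pose proof (Rle_abs r); lra. }
    apply (CV_disk_outside _ _ Hout), ex_series_lim_0.
    exists (exp (Rabs r + 1)). apply is_pseries_R, is_exp_Reals.
  - pose proof (CV_radius_ge_0 (fun n => / INR (Factorial.fact n))) as H. rewrite E in H. exact H.
Qed.

Lemma CV_radius_exprel_coef : CV_radius exprel_coef = p_infty.
Proof.
  rewrite <- CV_radius_exp_coef, <- (CV_radius_decr_1 (fun n => / INR (Factorial.fact n))).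
  apply CV_radius_ext. reflexivity.
Qed.

Lemma is_derive_exprel (u : R) : is_derive exprel u (Dexprel u).
Proof. apply is_derive_PSeries. rewrite CV_radius_exprel_coef. exact I. Qed.

Lemma continuity_pt_exprel (u : R) : continuity_pt exprel u.
Proof. apply PSeries_continuity. rewrite CV_radius_exprel_coef. exact I. Qed.

Lemma continuity_pt_Dexprel (u : R) : continuity_pt Dexprel u.
Proof. apply PSeries_continuity. rewrite CV_radius_derive, CV_radius_exprel_coef. exact I. Qed.

Lemma exp_sub1_exprel (u : R) : exp u - 1 = u * exprel u.
Proof.
  rewrite exp_Reals, PSeries_decr_1; [|exists (exp u); apply is_exp_Reals].
  change (PSeries (PS_decr_1 _) u) with (exprel u).
  change (/ INR (Factorial.fact 0)) with (/ 1). lra.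
Qed.

Lemma exprel_0 : exprel 0 = 1.
Proof. unfold exprel. rewrite PSeries_0. unfold exprel_coef. simpl. lra. Qed.

Lemma Dexprel_0 : Dexprel 0 = / 2.
Proof. unfold Dexprel. rewrite PSeries_0. unfold PS_derive, exprel_coef. simpl. field. Qed.

Lemma exprel_pos (u : R) : 0 < exprel u.
Proof.
  pose proof (exp_sub1_exprel u) as H.
  destruct (Req_EM_T u 0) as [->|Hu]; [rewrite exprel_0; lra|].
  pose proof (exp_ineq1 u Hu).
  destruct (Rlt_or_le u 0) as [Hn|Hp].
  - assert (exp u < 1) by (rewrite <- exp_0; apply exp_increasing; lra).
    destruct (Rle_or_lt (exprel u) 0); nra.
  - destruct (Rle_or_lt (exprel u) 0); nra.
Qed.

Lemma exprel_opp (u : R) : exprel (- u) = exp (- u) * exprel u.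
Proof.
  destruct (Req_EM_T u 0) as [->|Hu]; [rewrite Ropp_0, exp_0; ring|].
  apply (Rmult_eq_reg_l (- u)); [|lra].
  rewrite <- exp_sub1_exprel, exp_Ropp.
  replace (- u * (/ exp u * exprel u)) with (- (u * exprel u) / exp u) by (field; apply exp_neq_0).
  rewrite <- exp_sub1_exprel. field. apply exp_neq_0.
Qed.

Lemma exprel_Dexprel (u : R) : exprel u + u * Dexprel u = exp u.
Proof.
  assert (H1 : is_derive (fun t => t * exprel t) u (1 * exprel u + u * Dexprel u)).
  { apply is_derive_Reals, (derivable_pt_lim_mult id exprel).
    - apply derivable_pt_lim_id.
    - apply is_derive_Reals, is_derive_exprel. }
  assert (H2 : is_derive (fun t => t * exprel t) u (exp u)).
  { apply (is_derive_ext (fun t => exp t - 1)); [intro t; apply exp_sub1_exprel|].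
    auto_derive; auto; ring. }
  pose proof (is_derive_unique _ _ _ H1). pose proof (is_derive_unique _ _ _ H2). lra.
Qed.

Lemma sqr_mul_exprel_sub_Dexprel (u : R) :
  u * u * (exprel u - Dexprel u) = exp u - 1 - u.
Proof.
  replace (u * u * (exprel u - Dexprel u))
    with (u * (u * exprel u) + u * exprel u - u * (exprel u + u * Dexprel u)) by ring.
  rewrite <- exp_sub1_exprel, exprel_Dexprel. ring.
Qed.

Lemma exprel_sub_Dexprel_pos (u : R) : 0 < exprel u - Dexprel u.
Proof.
  destruct (Req_EM_T u 0) as [->|Hu]; [rewrite exprel_0, Dexprel_0; lra|].
  pose proof (sqr_mul_exprel_sub_Dexprel u). pose proof (exp_ineq1 u Hu).
  assert (0 < u * u) by (apply Rsqr_pos_lt; exact Hu).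
  destruct (Rle_or_lt (exprel u - Dexprel u) 0); nra.
Qed.

Lemma exprel_ge_exp_half (w : R) : 1 <= w -> exp (w / 2) / 2 <= exprel w.
Proof.
  intros Hw.
  assert (Hsq : exp w = exp (w / 2) * exp (w / 2)) by (rewrite <- exp_plus; f_equal; field).
  assert (H2 : 2 <= exp w) by (pose proof (exp_ineq1_le w); lra).
  assert (Hw2 : w <= exp (w / 2)).
  { pose proof (exp_ineq1_le (w / 4)).
    replace (exp (w / 2)) with (exp (w / 4) * exp (w / 4))
      by (rewrite <- exp_plus; f_equal; field).
    assert ((1 + w / 4) * (1 + w / 4) <= exp (w / 4) * exp (w / 4))
      by (apply Rmult_le_compat; lra).
    pose proof (pow2_ge_0 (1 - w / 4)). nra. }
  pose proof (exp_pos (w / 2)). pose proof (exp_sub1_exprel w).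
  apply (Rmult_le_reg_l w); [lra|]. nra.
Qed.

(** * The function lambda and its inverse *)

Lemma lambda_exprel (u : R) : lambda u = exp u / exprel u.
Proof.
  unfold lambda. destruct (Req_EM_T u 0) as [->|Hu]; [rewrite exp_0, exprel_0; field|].
  pose proof (exprel_pos u). rewrite exp_sub1_exprel. field. split; lra.
Qed.

Lemma lambda_exprel_opp (u : R) : lambda u = / exprel (- u).
Proof.
  rewrite lambda_exprel, exprel_opp, exp_Ropp.
  pose proof (exprel_pos u). pose proof (exp_pos u). field. lra.
Qed.

Lemma lambda_pos (u : R) : 0 < lambda u.
Proof. rewrite lambda_exprel_opp. apply Rinv_0_lt_compat, exprel_pos. Qed.

Lemma lambda_mul_exp_opp (v : R) : lambda v * exp (- v) = lambda (- v).
Proof.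
  rewrite lambda_exprel, (lambda_exprel_opp (- v)), Ropp_involutive, exp_Ropp.
  pose proof (exprel_pos v). pose proof (exp_pos v). field. lra.
Qed.

Lemma lambda_opp_le_exp (w : R) : 1 <= w -> lambda (- w) <= 2 * exp (- (w / 2)).
Proof.
  intros Hw. rewrite lambda_exprel_opp, Ropp_involutive, exp_Ropp.
  pose proof (exprel_ge_exp_half w Hw). pose proof (exp_pos (w / 2)).
  replace (2 * / exp (w / 2)) with (/ (exp (w / 2) / 2)) by (field; lra).
  apply Rinv_le_contravar; lra.
Qed.

Definition Dlambda (u : R) : R := exp u * (exprel u - Dexprel u) / exprel u ^ 2.

Lemma is_derive_lambda (u : R) : is_derive lambda u (Dlambda u).
Proof.
  apply (is_derive_ext (fun t => exp t / exprel t)); [intro t; rewrite lambda_exprel; reflexivity|].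
  pose proof (exprel_pos u).
  replace (Dlambda u) with ((exp u * exprel u - exp u * Dexprel u) / exprel u ^ 2)
    by (unfold Dlambda; field; lra).
  apply is_derive_div; [apply is_derive_exp|apply is_derive_exprel|lra].
Qed.

Lemma Dlambda_pos (u : R) : 0 < Dlambda u.
Proof.
  pose proof (exprel_pos u). pose proof (exprel_sub_Dexprel_pos u). pose proof (exp_pos u).
  unfold Dlambda. apply Rdiv_lt_0_compat; [apply Rmult_lt_0_compat|apply pow_lt]; lra.
Qed.

Lemma continuity_pt_Dlambda (u : R) : continuity_pt Dlambda u.
Proof.
  pose proof (exprel_pos u). unfold Dlambda.
  apply (continuity_pt_div (fun t => exp t * (exprel t - Dexprel t)) (fun t => exprel t ^ 2)).
  - apply continuity_pt_mult; [apply derivable_continuous_pt, derivable_pt_exp|].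
    apply continuity_pt_minus; [apply continuity_pt_exprel|apply continuity_pt_Dexprel].
  - apply (continuity_pt_comp exprel (fun t => t ^ 2)); [apply continuity_pt_exprel|].
    apply derivable_continuous_pt, derivable_pt_pow.
  - apply pow_nonzero. lra.
Qed.

Lemma continuity_pt_lambda (u : R) : continuity_pt lambda u.
Proof.
  apply derivable_continuous_pt. exists (Dlambda u). apply is_derive_Reals, is_derive_lambda.
Qed.

Lemma R_prefactor_Dlambda (v : R) : R_prefactor v * Dlambda v = lambda v.
Proof.
  rewrite lambda_exprel. unfold R_prefactor, Dlambda.
  pose proof (exprel_pos v). pose proof (exprel_sub_Dexprel_pos v).
  destruct (Req_EM_T v 0) as [->|Hv]; [rewrite exprel_0, Dexprel_0; field|].
  pose proof (sqr_mul_exprel_sub_Dexprel v). pose proof (exp_sub1_exprel v).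
  replace (1 + v - exp v) with (- (v * v * (exprel v - Dexprel v))) by lra.
  replace (1 - exp v) with (- (v * exprel v)) by lra.
  field. repeat split; lra.
Qed.

Lemma lambda_lt (x y : R) : x < y -> lambda x < lambda y.
Proof.
  intros Hxy. apply (incr_function lambda m_infty p_infty Dlambda); simpl; auto.
  - intros; apply is_derive_lambda.
  - intros; apply Dlambda_pos.
Qed.

Lemma lambda_le (x y : R) : x <= y -> lambda x <= lambda y.
Proof. intros [H| ->]; [left; apply lambda_lt, H|right; reflexivity]. Qed.

Lemma lambda_inj (x y : R) : lambda x = lambda y -> x = y.
Proof.
  intros H. destruct (Rtotal_order x y) as [h|[h|h]]; auto; apply lambda_lt in h; lra.
Qed.

Lemma lt_lambda (v : R) : v < lambda v.
Proof.
  destruct (Rle_or_lt v 0); [pose proof (lambda_pos v); lra|].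
  rewrite lambda_exprel. pose proof (exprel_pos v). pose proof (exp_sub1_exprel v).
  apply Rlt_div_r; lra.
Qed.

Lemma lambda_opp_le_inv (w : R) : 0 < w -> lambda (- w) <= 4 / w.
Proof.
  intros Hw. rewrite lambda_exprel_opp, Ropp_involutive.
  pose proof (exprel_pos w). pose proof (exp_sub1_exprel w).
  pose proof (exp_ineq1_le (w / 2)).
  replace (exp w) with (exp (w / 2) * exp (w / 2)) in * by (rewrite <- exp_plus; f_equal; field).
  assert (w / 4 <= exprel w) by nra.
  replace (4 / w) with (/ (w / 4)) by (field; lra).
  apply Rinv_le_contravar; lra.
Qed.

Lemma lambda_surj (y : R) : 0 < y -> exists v, lambda v = y.
Proof.
  intros Hy.
  assert (Hy4 : 0 < 4 / y) by (apply Rdiv_lt_0_compat; lra).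
  assert (Hlo : lambda (- (4 / y + 1)) < y).
  { eapply Rle_lt_trans; [apply lambda_opp_le_inv; lra|].
    apply Rlt_div_l; [lra|]. replace (y * (4 / y + 1)) with (4 + y) by (field; lra). lra. }
  pose proof (lt_lambda y).
  destruct (IVT (fun t => lambda t - y) (- (4 / y + 1)) y) as [z [_ Hz]]; try lra.
  - intro t. apply continuity_pt_minus; [apply continuity_pt_lambda|apply continuity_pt_const].
    intros ? ?; reflexivity.
  - exists z. lra.
Qed.

Lemma lambda_lambda_inv (y : R) : 0 < y -> lambda (lambda_inv y) = y.
Proof.
  intros Hy. apply (epsilon_spec (inhabits 0) (fun u => lambda u = y)), lambda_surj, Hy.
Qed.

Lemma lambda_inv_lambda (v : R) : lambda_inv (lambda v) = v.
Proof. apply lambda_inj, lambda_lambda_inv, lambda_pos. Qed.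

Lemma lambda_inv_le (y v : R) : 0 < y -> y <= lambda v -> lambda_inv y <= v.
Proof.
  intros Hy H. destruct (Rle_or_lt (lambda_inv y) v) as [h|h]; auto.
  apply lambda_lt in h. rewrite lambda_lambda_inv in h; lra.
Qed.

Lemma lambda_inv_ge (y v : R) : 0 < y -> lambda v <= y -> v <= lambda_inv y.
Proof.
  intros Hy H. destruct (Rle_or_lt v (lambda_inv y)) as [h|h]; auto.
  apply lambda_lt in h. rewrite lambda_lambda_inv in h; lra.
Qed.

Lemma lambda_inv_lt (y v : R) : 0 < y -> y < lambda v -> lambda_inv y < v.
Proof.
  intros Hy H. destruct (Rlt_or_le (lambda_inv y) v) as [h|h]; auto.
  apply lambda_le in h. rewrite lambda_lambda_inv in h; lra.
Qed.

Lemma lambda_inv_gt (y v : R) : 0 < y -> lambda v < y -> v < lambda_inv y.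
Proof.
  intros Hy H. destruct (Rlt_or_le v (lambda_inv y)) as [h|h]; auto.
  apply lambda_le in h. rewrite lambda_lambda_inv in h; lra.
Qed.

Lemma continuity_pt_lambda_inv (y0 : R) : 0 < y0 -> continuity_pt lambda_inv y0.
Proof.
  intros Hy0 eps Heps. set (v0 := lambda_inv y0).
  assert (E0 : lambda v0 = y0) by (apply lambda_lambda_inv; auto).
  assert (Hup : y0 < lambda (v0 + eps)) by (rewrite <- E0; apply lambda_lt; lra).
  assert (Hdn : lambda (v0 - eps) < y0) by (rewrite <- E0; apply lambda_lt; lra).
  set (d := Rmin y0 (Rmin (lambda (v0 + eps) - y0) (y0 - lambda (v0 - eps)))).
  assert (Hd : d <= y0 /\ d <= lambda (v0 + eps) - y0 /\ d <= y0 - lambda (v0 - eps))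
    by (unfold d; repeat split; eauto using Rle_trans, Rmin_l, Rmin_r).
  exists d. split; [unfold d; repeat apply Rmin_pos; lra|].
  intros y [_ Hy]. simpl in *. unfold R_dist in *.
  apply Rabs_def2 in Hy. apply Rabs_def1.
  - assert (lambda_inv y < v0 + eps) by (apply lambda_inv_lt; lra). lra.
  - assert (v0 - eps < lambda_inv y) by (apply lambda_inv_gt; lra). lra.
Qed.

Definition decay_radius (a : R) : R := Rmax 1 (4 * Rabs (ln (2 * a))).

Lemma decay_radius_ge_1 (a : R) : 1 <= decay_radius a.
Proof. apply Rmax_l. Qed.

Lemma ln_a_lambda_opp_le (a w : R) : 0 < a -> decay_radius a <= w ->
  ln (a * lambda (- w)) <= - w / 4.
Proof.
  intros Ha Hw. pose proof (decay_radius_ge_1 a). unfold decay_radius in *.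
  pose proof (Rmax_r 1 (4 * Rabs (ln (2 * a)))).
  pose proof (Rle_abs (ln (2 * a))).
  apply Rle_trans with (ln (2 * a * exp (- (w / 2)))).
  - apply ln_le; [apply Rmult_lt_0_compat; [lra|apply lambda_pos]|].
    replace (2 * a * exp (- (w / 2))) with (a * (2 * exp (- (w / 2)))) by ring.
    apply Rmult_le_compat_l; [lra|]. apply lambda_opp_le_exp. lra.
  - rewrite ln_mult, ln_exp by (try apply exp_pos; lra). lra.
Qed.

(** * Improper integrals of functions with inverse-square decay *)

Lemma continuous_of_continuity_pt (f : R -> R) (x : R) : continuity_pt f x -> continuous f x.
Proof. apply continuity_pt_filterlim. Qed.

Lemma ex_RInt_of_continuity (f : R -> R) (a b : R) :
  (forall x, continuity_pt f x) -> ex_RInt f a b.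
Proof.
  intros Hc. apply (@ex_RInt_continuous R_CompleteNormedModule).
  intros z _. apply continuous_of_continuity_pt, Hc.
Qed.

Lemma RInt_inv_sqr (C p q : R) : 0 < p -> p <= q ->
  RInt (fun u => C / u ^ 2) p q = C / p - C / q.
Proof.
  intros Hp Hpq. apply is_RInt_unique.
  replace (C / p - C / q) with (minus ((fun u => - C / u) q) ((fun u => - C / u) p))
    by (unfold minus, plus, opp; simpl; field; lra).
  apply (@is_RInt_derive R_CompleteNormedModule (fun u => - C / u));
    intros x Hx; rewrite Rmin_left in Hx by lra.
  - auto_derive; [lra|field; lra].
  - apply continuous_of_continuity_pt, continuity_pt_div.
    + apply continuity_pt_const. intros ? ?; reflexivity.
    + apply derivable_continuous_pt, derivable_pt_pow.
    + apply pow_nonzero. lra.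
Qed.

Lemma RInt_opp_var (f : R -> R) (a b : R) : (forall x, continuity_pt f x) ->
  RInt f a b = RInt (fun y => - f (- y)) (- a) (- b).
Proof.
  intros Hc. pose proof (RInt_comp_lin f (-1) 0 (- a) (- b)) as H.
  replace (-1 * - a + 0) with a in H by ring. replace (-1 * - b + 0) with b in H by ring.
  rewrite <- H by (apply ex_RInt_of_continuity; auto).
  apply RInt_ext. intros x _. unfold scal; simpl; unfold mult; simpl.
  replace (-1 * x + 0) with (- x) by ring. ring.
Qed.

Lemma abs_RInt_right_tail_le (f : R -> R) (U C : R) :
  (forall x, continuity_pt f x) -> 0 < U -> 0 <= C ->
  (forall u, U <= u -> Rabs (f u) <= C / u ^ 2) ->
  forall p q, U <= p -> p <= q -> Rabs (RInt f p q) <= C / p.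
Proof.
  intros Hc HU HC Hdecay p q Hp Hpq.
  assert (Hg : forall x, 0 < x -> continuity_pt (fun u => C / u ^ 2) x).
  { intros x Hx. apply continuity_pt_div.
    - apply continuity_pt_const. intros ? ?; reflexivity.
    - apply derivable_continuous_pt, derivable_pt_pow.
    - apply pow_nonzero. lra. }
  eapply Rle_trans; [apply abs_RInt_le; [lra|apply ex_RInt_of_continuity; auto]|].
  eapply Rle_trans; [apply RInt_le with (g := fun u => C / u ^ 2); [lra| | |]|].
  - apply ex_RInt_of_continuity. intro x.
    apply (continuity_pt_comp f Rabs); [apply Hc|apply Rcontinuity_abs].
  - apply (@ex_RInt_continuous R_CompleteNormedModule). intros z Hz.
    rewrite Rmin_left in Hz by lra. apply continuous_of_continuity_pt, Hg. lra.
  - intros x Hx. apply Hdecay. lra.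
  - rewrite RInt_inv_sqr by lra.
    assert (0 <= C / q) by (apply Rdiv_le_0_compat; lra). lra.
Qed.

Lemma abs_RInt_left_tail_le (f : R -> R) (U C : R) :
  (forall x, continuity_pt f x) -> 0 < U -> 0 <= C ->
  (forall u, u <= - U -> Rabs (f u) <= C / u ^ 2) ->
  forall p q, q <= p -> p <= - U -> Rabs (RInt f q p) <= C / - p.
Proof.
  intros Hc HU HC Hdecay p q Hqp Hp.
  assert (Hc' : forall x, continuity_pt (fun y => - f (- y)) x).
  { intro x. apply continuity_pt_opp, (continuity_pt_comp Ropp f); [|apply Hc].
    apply continuity_pt_opp, continuity_pt_id. }
  rewrite RInt_opp_var, <- opp_RInt_swap by (auto; apply ex_RInt_of_continuity; auto).
  unfold opp; simpl. rewrite Rabs_Ropp.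
  apply (abs_RInt_right_tail_le _ U C Hc' HU HC); [|lra|lra].
  intros u Hu. rewrite Rabs_Ropp. replace (u ^ 2) with ((- u) ^ 2) by ring.
  apply Hdecay. lra.
Qed.

Section InverseSquareDecay.

Variables (f : R -> R) (U C : R).
Hypothesis f_cont : forall x, continuity_pt f x.
Hypothesis U_pos : 0 < U.
Hypothesis C_nonneg : 0 <= C.
Hypothesis f_decay : forall u, U <= Rabs u -> Rabs (f u) <= C / u ^ 2.

Lemma abs_RInt_sub_RInt_sym_le (M a b : R) : U <= M -> a <= - M -> M <= b ->
  Rabs (RInt f a b - RInt f (- M) M) <= 2 * C / M.
Proof.
  intros HM Ha Hb.
  rewrite <- (RInt_Chasles f a (- M) b), <- (RInt_Chasles f (- M) M b)
    by (apply ex_RInt_of_continuity; auto).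
  unfold plus; simpl.
  replace (RInt f a (- M) + (RInt f (- M) M + RInt f M b) - RInt f (- M) M)
    with (RInt f a (- M) + RInt f M b) by ring.
  eapply Rle_trans; [apply Rabs_triang|].
  pose proof (abs_RInt_left_tail_le f U C f_cont U_pos C_nonneg) as Hl.
  pose proof (abs_RInt_right_tail_le f U C f_cont U_pos C_nonneg) as Hr.
  specialize (Hl ltac:(intros u Hu; apply f_decay; rewrite Rabs_left; lra) (- M) a).
  specialize (Hr ltac:(intros u Hu; apply f_decay; rewrite Rabs_pos_eq; lra) M b).
  rewrite Ropp_involutive in Hl.
  replace (2 * C / M) with (C / M + C / M) by (field; lra).
  apply Rplus_le_compat; [apply Hl|apply Hr]; lra.
Qed.

Lemma inverse_square_eventually_small (eps : R) : 0 < eps ->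
  exists N : nat, forall n, (N <= n)%nat -> U <= INR n /\ 2 * C / INR n < eps.
Proof.
  intros Heps. destruct (INR_unbounded (Rmax U (2 * C / eps))) as [N HN].
  pose proof (Rmax_l U (2 * C / eps)). pose proof (Rmax_r U (2 * C / eps)).
  exists N. intros n Hn. apply le_INR in Hn. split; [lra|].
  assert (Hn' : 2 * C / eps < INR n) by lra.
  apply Rlt_div_l in Hn'; [|exact Heps]. apply Rlt_div_l; nra.
Qed.

Lemma improper_int_R_of_inverse_square_decay : exists L, improper_int_R f L.
Proof.
  set (I := fun n : nat => RInt f (- INR n) (INR n) : R).
  assert (Hsmall : forall eps, 0 < eps -> exists N : nat, forall n, (N <= n)%nat ->
    U <= INR n /\ forall a b, a <= - INR n -> INR n <= b -> Rabs (RInt f a b - I n) < eps).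
  { intros eps Heps. destruct (inverse_square_eventually_small eps Heps) as [N HN].
    exists N. intros n Hn. destruct (HN n Hn) as [HU Hlt]. split; [exact HU|].
    intros a b Ha Hb. eapply Rle_lt_trans; [|exact Hlt].
    apply abs_RInt_sub_RInt_sym_le; assumption. }
  assert (Hcauchy : Cauchy_crit I).
  { intros eps Heps. destruct (Hsmall (eps / 2) ltac:(lra)) as [N HN]. exists N.
    intros n m Hn Hm. destruct (HN N (le_n N)) as [_ HN'].
    apply le_INR in Hn. apply le_INR in Hm.
    pose proof (HN' (- INR n) (INR n) ltac:(lra) ltac:(lra)).
    pose proof (HN' (- INR m) (INR m) ltac:(lra) ltac:(lra)).
    unfold Rdist. fold (I n) (I m) in *.
    replace (I n - I m) with ((I n - I N) - (I m - I N)) by ring.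
    eapply Rle_lt_trans; [apply Rabs_triang|]. rewrite Rabs_Ropp. lra. }
  destruct (Rcomplete.R_complete I Hcauchy) as [L HL].
  exists L. split.
  - intros a b _. constructor. apply ex_RInt_Reals_0, ex_RInt_of_continuity, f_cont.
  - intros eps Heps.
    destruct (HL (eps / 2) ltac:(lra)) as [N1 HN1].
    destruct (Hsmall (eps / 2) ltac:(lra)) as [N2 HN2].
    destruct (HN2 (N1 + N2)%nat ltac:(lia)) as [HU Hclose].
    exists (INR (N1 + N2)). split; [lra|].
    intros a b pr Ha Hb. rewrite <- RInt_Reals.
    specialize (HN1 (N1 + N2)%nat ltac:(lia)). unfold Rdist in HN1.
    replace (RInt f a b - L) with ((RInt f a b - I (N1 + N2)%nat) + (I (N1 + N2)%nat - L))
      by ring.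
    eapply Rle_lt_trans; [apply Rabs_triang|].
    specialize (Hclose a b Ha Hb). lra.
Qed.

End InverseSquareDecay.

(** * The substitution r = a lambda(-u) *)

Section LambdaSubstitution.

Variables (a : R) (F G : R -> R).
Hypothesis a_pos : 0 < a.
Hypothesis F_cont : forall u, continuity_pt F u.
Hypothesis G_lambda : forall u, a * Dlambda (- u) * G (a * lambda (- u)) = F u.

Let rho (r : R) : R := - lambda_inv (r / a).

Lemma a_lambda_opp_rho (r : R) : 0 < r -> a * lambda (- rho r) = r.
Proof.
  intros Hr. unfold rho. rewrite Ropp_involutive, lambda_lambda_inv; [field; lra|].
  apply Rdiv_lt_0_compat; lra.
Qed.

Lemma G_rho (r : R) : 0 < r -> G r = F (rho r) / (a * Dlambda (- rho r)).
Proof.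
  intros Hr. rewrite <- G_lambda, a_lambda_opp_rho by exact Hr.
  pose proof (Dlambda_pos (- rho r)). field. split; lra.
Qed.

Lemma continuity_pt_rho (r : R) : 0 < r -> continuity_pt rho r.
Proof.
  intros Hr. apply continuity_pt_opp, (continuity_pt_comp (fun r => r / a) lambda_inv).
  - apply continuity_pt_div; [apply continuity_pt_id|apply continuity_pt_const|lra].
    intros ? ?; reflexivity.
  - apply continuity_pt_lambda_inv, Rdiv_lt_0_compat; lra.
Qed.

Lemma continuity_pt_G (r : R) : 0 < r -> continuity_pt G r.
Proof.
  intros Hr.
  apply continuity_pt_locally_ext with
    (f := fun r => F (rho r) / (a * Dlambda (- rho r))) (a := r); [exact Hr| |].
  { intros y Hy. unfold Rdist in Hy. apply Rabs_def2 in Hy. symmetry. apply G_rho. lra. }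
  pose proof (Dlambda_pos (- rho r)).
  apply continuity_pt_div; [| |apply Rgt_not_eq, Rmult_lt_0_compat; lra].
  - apply (continuity_pt_comp rho F); [apply continuity_pt_rho, Hr|apply F_cont].
  - apply continuity_pt_mult; [apply continuity_pt_const; intros ? ?; reflexivity|].
    apply (continuity_pt_comp (fun r => - rho r) Dlambda); [|apply continuity_pt_Dlambda].
    apply continuity_pt_opp, continuity_pt_rho, Hr.
Qed.

Lemma is_derive_a_lambda_opp (u : R) :
  is_derive (fun u => a * lambda (- u)) u (- (a * Dlambda (- u))).
Proof.
  replace (- (a * Dlambda (- u))) with (a * scal (-1) (Dlambda (- u)))
    by (unfold scal; simpl; unfold mult; simpl; ring).
  apply is_derive_scal, (is_derive_comp lambda Ropp); [apply is_derive_lambda|].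
  auto_derive; auto.
Qed.

Lemma RInt_G (p q : R) : 0 < p -> 0 < q -> RInt G p q = RInt F (rho q) (rho p).
Proof.
  intros Hp Hq.
  pose proof (RInt_comp (V := R_CompleteNormedModule) G (fun u => a * lambda (- u))
    (fun u => - (a * Dlambda (- u))) (rho p) (rho q)) as Hsubst.
  simpl in Hsubst. rewrite !a_lambda_opp_rho in Hsubst by assumption.
  rewrite <- Hsubst.
  - transitivity (RInt (fun u => opp (F u)) (rho p) (rho q)).
    + apply RInt_ext. intros u _. rewrite <- G_lambda.
      unfold scal, opp; simpl; unfold mult; simpl. ring.
    + rewrite (RInt_opp (V := R_CompleteNormedModule)), opp_RInt_swap
        by (apply ex_RInt_of_continuity; exact F_cont).
      reflexivity.
  - intros u _. apply continuous_of_continuity_pt, continuity_pt_G.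
    apply Rmult_lt_0_compat; [lra|apply lambda_pos].
  - intros u _. split; [apply is_derive_a_lambda_opp|].
    apply continuous_of_continuity_pt, continuity_pt_opp, continuity_pt_mult;
      [apply continuity_pt_const; intros ? ?; reflexivity|].
    apply (continuity_pt_comp Ropp Dlambda); [|apply continuity_pt_Dlambda].
    apply continuity_pt_opp, continuity_pt_id.
Qed.

Lemma improper_int_pos_of_improper_int_R (L : R) :
  improper_int_R F L -> improper_int_pos G L.
Proof.
  intros [_ HL]. split.
  - intros p q Hp Hpq. constructor. apply ex_RInt_Reals_0.
    apply (@ex_RInt_continuous R_CompleteNormedModule). intros z Hz.
    rewrite Rmin_left in Hz by lra. apply continuous_of_continuity_pt, continuity_pt_G. lra.
  - intros eps Heps. destruct (HL eps Heps) as [M [HM HMint]].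
    pose proof (lambda_pos (- M)). pose proof (lambda_lt (- M) M ltac:(lra)).
    exists (a * lambda (- M)), (a * lambda M).
    split; [apply Rmult_lt_0_compat; lra|split; [apply Rmult_lt_compat_l; lra|]].
    intros p q pr Hp Hpd HMq.
    assert (Hpq : p <= q) by nra.
    rewrite <- RInt_Reals, RInt_G by lra.
    assert (Hrho_p : M <= rho p).
    { unfold rho. apply Ropp_le_cancel. rewrite Ropp_involutive.
      apply lambda_inv_le; [apply Rdiv_lt_0_compat; lra|].
      apply (Rmult_le_reg_l a); [lra|]. replace (a * (p / a)) with p by (field; lra). lra. }
    assert (Hrho_q : rho q <= - M).
    { unfold rho. apply Ropp_le_contravar.
      apply lambda_inv_ge; [apply Rdiv_lt_0_compat; lra|].
      apply (Rmult_le_reg_l a); [lra|]. replace (a * (q / a)) with q by (field; lra). lra. }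
    assert (Hri : Riemann_integrable F (rho q) (rho p))
      by apply ex_RInt_Reals_0, ex_RInt_of_continuity, F_cont.
    rewrite (RInt_Reals _ _ _ Hri). apply HMint; assumption.
Qed.

End LambdaSubstitution.

(** * Bounds on Schwartz functions *)

Lemma Schwartz_R_continuous (g : R -> R) : Schwartz_R g -> forall x, continuity_pt g x.
Proof.
  intros [D [HD0 [HD _]]] x. apply derivable_continuous_pt. exists (D 1%nat x).
  apply is_derive_Reals, (is_derive_ext (D 0%nat)); [apply HD0|apply is_derive_Reals, HD].
Qed.

Lemma Schwartz_R_bound (g : R -> R) : Schwartz_R g ->
  exists M, 0 <= M /\ forall t, Rabs (g t) <= M /\ t ^ 2 * Rabs (g t) <= M.
Proof.
  intros [D [HD0 [_ Hbound]]].
  destruct (Hbound 0%nat 0%nat) as [B HB]. destruct (Hbound 2%nat 0%nat) as [K HK].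
  assert (Hsup : forall t, Rabs (g t) <= B /\ t ^ 2 * Rabs (g t) <= K).
  { intro t. specialize (HB t). specialize (HK t). rewrite HD0, Rabs_mult in *.
    rewrite pow_O, Rabs_R1, Rmult_1_l in HB. rewrite (Rabs_pos_eq (t ^ 2)) in HK by apply pow2_ge_0.
    split; assumption. }
  exists (B + K). pose proof (Hsup 0) as [H0 H0']. pose proof (Rabs_pos (g 0)).
  split; [nra|]. intro t. pose proof (Hsup t) as [Ht Ht'].
  pose proof (Rabs_pos (g t)). pose proof (pow2_ge_0 t). split; nra.
Qed.

Lemma abs_le_of_sqr_mul_le (t w x M : R) : 0 < w -> t <= - w / 4 ->
  t ^ 2 * Rabs x <= M -> Rabs x <= 16 * M / w ^ 2.
Proof.
  intros Hw Ht HM. pose proof (Rabs_pos x).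
  assert (Hw2 : 0 < w ^ 2) by (apply pow_lt; lra).
  assert (w ^ 2 <= 16 * t ^ 2) by nra.
  apply Rle_div_r; [exact Hw2|]. nra.
Qed.

Definition Cbounded (z : Cx) (m : R) : Prop := Rabs (fst z) <= m /\ Rabs (snd z) <= m.

Lemma Schwartz_Rplus_bound (psi : R -> Cx) : Schwartz_Rplus psi ->
  exists M, 0 <= M /\ forall t, Cbounded (psi (exp t)) M /\
    forall w, 0 < w -> t <= - w / 4 -> Cbounded (psi (exp t)) (M / w ^ 2).
Proof.
  intros [Hre Him].
  destruct (Schwartz_R_bound _ Hre) as [M1 [HM1 Hb1]].
  destruct (Schwartz_R_bound _ Him) as [M2 [HM2 Hb2]].
  exists (16 * (M1 + M2)). split; [lra|]. intro t.
  destruct (Hb1 t) as [Hre0 Hre2]. destruct (Hb2 t) as [Him0 Him2].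
  split; [split; simpl; lra|]. intros w Hw Ht.
  split; simpl; apply (abs_le_of_sqr_mul_le t); lra.
Qed.

Lemma Schwartz_Rplus_lambda_bound (psi : R -> Cx) (a : R) : Schwartz_Rplus psi -> 0 < a ->
  exists M, 0 <= M /\ (forall y, 0 < y -> Cbounded (psi y) M) /\
    forall w, decay_radius a <= w -> Cbounded (psi (a * lambda (- w))) (M / w ^ 2).
Proof.
  intros Hpsi Ha. destruct (Schwartz_Rplus_bound psi Hpsi) as [M [HM Hb]].
  exists M. split; [lra|split].
  - intros y Hy. rewrite <- (exp_ln y Hy). apply Hb.
  - intros w Hw. pose proof (decay_radius_ge_1 a).
    assert (Hpos : 0 < a * lambda (- w)) by (apply Rmult_lt_0_compat; [lra|apply lambda_pos]).
    rewrite <- (exp_ln _ Hpos). apply Hb; [lra|]. apply ln_a_lambda_opp_le; assumption.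
Qed.

(** * The two integrands *)

Lemma Cbounded_weaken (z : Cx) (m m' : R) : Cbounded z m -> m <= m' -> Cbounded z m'.
Proof. intros [H1 H2] H. split; lra. Qed.

Lemma Cbounded_expi (t : R) : Cbounded (Cexpi t) 1.
Proof. split; apply Rabs_le; simpl; [pose proof (COS_bound t)|pose proof (SIN_bound t)]; lra. Qed.

Lemma Rabs_mul3_le (x y z al be : R) : Rabs x <= al -> Rabs y <= be -> Rabs z <= 1 ->
  Rabs (x * y * z) <= al * be.
Proof.
  intros Hx Hy Hz. rewrite !Rabs_mult, <- (Rmult_1_r (al * be)).
  pose proof (Rabs_pos x). pose proof (Rabs_pos y). pose proof (Rabs_pos z).
  apply Rmult_le_compat; [nra|lra| |lra]. apply Rmult_le_compat; lra.
Qed.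

Lemma Rabs_add4_le (p q r s : R) : Rabs (p + q + r + s) <= Rabs p + Rabs q + Rabs r + Rabs s.
Proof.
  pose proof (Rabs_triang (p + q + r) s). pose proof (Rabs_triang (p + q) r).
  pose proof (Rabs_triang p q). lra.
Qed.

Lemma Cbounded_mul_conj (z w e : Cx) (al be : R) :
  Cbounded z al -> Cbounded w be -> Cbounded e 1 ->
  Cbounded (Cmul (Cmul z (Cconj w)) e) (4 * (al * be)).
Proof.
  destruct z as [z1 z2], w as [w1 w2], e as [e1 e2].
  intros [Hz1 Hz2] [Hw1 Hw2] [He1 He2]; unfold Cbounded, Cmul, Cconj; simpl in *.
  assert (Hw1' : Rabs (- w1) <= be) by (rewrite Rabs_Ropp; exact Hw1).
  assert (Hw2' : Rabs (- w2) <= be) by (rewrite Rabs_Ropp; exact Hw2).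
  split.
  - replace ((z1 * w1 - z2 * - w2) * e1 - (z1 * - w2 + z2 * w1) * e2)
      with (z1 * w1 * e1 + z2 * w2 * e1 + z1 * w2 * e2 + z2 * (- w1) * e2) by ring.
    eapply Rle_trans; [apply Rabs_add4_le|].
    pose proof (Rabs_mul3_le z1 w1 e1 al be Hz1 Hw1 He1).
    pose proof (Rabs_mul3_le z2 w2 e1 al be Hz2 Hw2 He1).
    pose proof (Rabs_mul3_le z1 w2 e2 al be Hz1 Hw2 He2).
    pose proof (Rabs_mul3_le z2 (- w1) e2 al be Hz2 Hw1' He2). lra.
  - replace ((z1 * w1 - z2 * - w2) * e2 + (z1 * - w2 + z2 * w1) * e1)
      with (z1 * w1 * e2 + z2 * w2 * e2 + z1 * (- w2) * e1 + z2 * w1 * e1) by ring.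
    eapply Rle_trans; [apply Rabs_add4_le|].
    pose proof (Rabs_mul3_le z1 w1 e2 al be Hz1 Hw1 He2).
    pose proof (Rabs_mul3_le z2 w2 e2 al be Hz2 Hw2 He2).
    pose proof (Rabs_mul3_le z1 (- w2) e1 al be Hz1 Hw2' He1).
    pose proof (Rabs_mul3_le z2 w1 e1 al be Hz2 Hw1 He1). lra.
Qed.

Lemma W_Aff_integrand_decay (psi phi : R -> Cx) (x a : R) :
  Schwartz_Rplus psi -> Schwartz_Rplus phi -> 0 < a ->
  exists C, 0 <= C /\ forall u, decay_radius a <= Rabs u ->
    Cbounded (W_Aff_integrand psi phi x a u) (C / u ^ 2).
Proof.
  intros Hpsi Hphi Ha.
  destruct (Schwartz_Rplus_lambda_bound psi a Hpsi Ha) as [M1 [HM1 [Hpsi_sup Hpsi_decay]]].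
  destruct (Schwartz_Rplus_lambda_bound phi a Hphi Ha) as [M2 [HM2 [Hphi_sup Hphi_decay]]].
  exists (4 * (M1 * M2)). split; [nra|]. intros u Hu.
  assert (Hu0 : u <> 0).
  { intros ->. rewrite Rabs_R0 in Hu. pose proof (decay_radius_ge_1 a). lra. }
  assert (Hpos : forall v, 0 < a * lambda v)
    by (intro v; apply Rmult_lt_0_compat; [lra|apply lambda_pos]).
  unfold W_Aff_integrand. destruct (Rle_or_lt 0 u) as [Hnn|Hneg].
  - rewrite Rabs_pos_eq in Hu by lra.
    eapply Cbounded_weaken; [apply Cbounded_mul_conj;
      [apply Hpsi_sup, Hpos|apply Hphi_decay, Hu|apply Cbounded_expi]|].
    right. field. exact Hu0.
  - rewrite Rabs_left in Hu by lra.
    rewrite <- (Ropp_involutive u) at 1.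
    eapply Cbounded_weaken; [apply Cbounded_mul_conj;
      [apply Hpsi_decay, Hu|apply Hphi_sup, Hpos|apply Cbounded_expi]|].
    right. replace ((- u) ^ 2) with (u ^ 2) by ring. field. exact Hu0.
Qed.

Definition Ccontinuity_pt (f : R -> Cx) (u : R) : Prop :=
  continuity_pt (fun t => fst (f t)) u /\ continuity_pt (fun t => snd (f t)) u.

Lemma Ccontinuity_pt_mul (f g : R -> Cx) (u : R) :
  Ccontinuity_pt f u -> Ccontinuity_pt g u -> Ccontinuity_pt (fun t => Cmul (f t) (g t)) u.
Proof.
  intros [F1 F2] [G1 G2]. unfold Cmul; split; simpl.
  - apply (continuity_pt_minus (fun t => fst (f t) * fst (g t)) (fun t => snd (f t) * snd (g t)));
      apply continuity_pt_mult; assumption.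
  - apply (continuity_pt_plus (fun t => fst (f t) * snd (g t)) (fun t => snd (f t) * fst (g t)));
      apply continuity_pt_mult; assumption.
Qed.

Lemma Ccontinuity_pt_conj (f : R -> Cx) (u : R) :
  Ccontinuity_pt f u -> Ccontinuity_pt (fun t => Cconj (f t)) u.
Proof. intros [F1 F2]. split; [exact F1|apply (continuity_pt_opp (fun t => snd (f t))), F2]. Qed.

Lemma Ccontinuity_pt_expi (w : R -> R) (u : R) :
  continuity_pt w u -> Ccontinuity_pt (fun t => Cexpi (w t)) u.
Proof.
  intros Hw. split; [apply (continuity_pt_comp w cos)|apply (continuity_pt_comp w sin)];
    auto using continuity_cos, continuity_sin.
Qed.

Lemma Ccontinuity_pt_Schwartz_Rplus_comp (psi : R -> Cx) (w : R -> R) (u : R) :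
  Schwartz_Rplus psi -> (forall t, 0 < w t) -> continuity_pt w u ->
  Ccontinuity_pt (fun t => psi (w t)) u.
Proof.
  intros [Hre Him] Hpos Hw.
  assert (Hlog : continuity_pt (fun t => ln (w t)) u).
  { apply (continuity_pt_comp w ln); [exact Hw|].
    apply continuity_pt_filterlim, continuous_ln, Hpos. }
  assert (Hexp_ln : forall t, psi (w t) = psi (exp (ln (w t)))) by (intro t; rewrite exp_ln; auto).
  split.
  - apply (continuity_pt_ext (fun t => fst (psi (exp (ln (w t))))));
      [intro; rewrite <- Hexp_ln; auto|].
    apply (continuity_pt_comp (fun t => ln (w t)) (fun s => fst (psi (exp s))));
      [exact Hlog|apply Schwartz_R_continuous, Hre].
  - apply (continuity_pt_ext (fun t => snd (psi (exp (ln (w t))))));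
      [intro; rewrite <- Hexp_ln; auto|].
    apply (continuity_pt_comp (fun t => ln (w t)) (fun s => snd (psi (exp s))));
      [exact Hlog|apply Schwartz_R_continuous, Him].
Qed.

Lemma W_Aff_integrand_continuity (psi phi : R -> Cx) (x a : R) :
  Schwartz_Rplus psi -> Schwartz_Rplus phi -> 0 < a ->
  forall u, Ccontinuity_pt (W_Aff_integrand psi phi x a) u.
Proof.
  intros Hpsi Hphi Ha u.
  assert (Hpos : forall v, 0 < a * lambda v)
    by (intro v; apply Rmult_lt_0_compat; [lra|apply lambda_pos]).
  assert (Hopp : continuity_pt Ropp u) by apply continuity_pt_opp, continuity_pt_id.
  unfold W_Aff_integrand. apply Ccontinuity_pt_mul; [apply Ccontinuity_pt_mul|].
  - apply (Ccontinuity_pt_Schwartz_Rplus_comp psi (fun t => a * lambda t)); auto.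
    apply (continuity_pt_scal lambda a), continuity_pt_lambda.
  - apply Ccontinuity_pt_conj.
    apply (Ccontinuity_pt_Schwartz_Rplus_comp phi (fun t => a * lambda (- t))); auto.
    apply (continuity_pt_scal (fun t => lambda (- t)) a).
    apply (continuity_pt_comp Ropp lambda); [exact Hopp|apply continuity_pt_lambda].
  - apply Ccontinuity_pt_expi, (continuity_pt_opp (fun t => 2 * PI * x * t)).
    apply (continuity_pt_scal id (2 * PI * x)), continuity_pt_id.
Qed.

Definition L2Rplus_integrand (f g : R -> Cx) (r : R) : Cx :=
  Cscale (/ r) (Cmul (f r) (Cconj (g r))).

Lemma L2Rplus_integrand_R_Aff_lambda (psi phi : R -> Cx) (x a u : R) : 0 < a ->
  let J := a * Dlambda (- u) in
  let G := L2Rplus_integrand (R_Aff x a psi) phi (a * lambda (- u)) in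
  J * fst G = fst (W_Aff_integrand psi phi x a u) /\
  J * snd G = snd (W_Aff_integrand psi phi x a u).
Proof.
  intros Ha J G. unfold J, G, L2Rplus_integrand, R_Aff, W_Aff_integrand.
  replace (a * lambda (- u) / a) with (lambda (- u)) by (field; lra).
  rewrite lambda_inv_lambda.
  replace (a * lambda (- u) * exp (- - u)) with (a * lambda u)
    by (rewrite Rmult_assoc, lambda_mul_exp_opp, Ropp_involutive; reflexivity).
  replace (2 * PI * x * - u) with (- (2 * PI * x * u)) by ring.
  pose proof (R_prefactor_Dlambda (- u)). pose proof (Dlambda_pos (- u)).
  pose proof (lambda_pos (- u)).
  replace (R_prefactor (- u)) with (lambda (- u) / Dlambda (- u)) by (field_simplify_eq; lra).
  destruct (psi (a * lambda u)) as [p1 p2], (phi (a * lambda (- u))) as [q1 q2].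
  unfold Cscale, Cmul, Cconj, Cexpi; simpl.
  split; field; lra.
Qed.

Theorem mainTheorem18 :
  forall (psi phi : R -> Cx),
    Schwartz_Rplus psi -> Schwartz_Rplus phi ->
    forall x a : R, 0 < a ->
      exists L : Cx,
        W_Aff_is psi phi x a L /\
        L2Rplus_inner_is (R_Aff x a psi) phi L.
Proof.
  intros psi phi Hpsi Hphi x a Ha.
  set (F := W_Aff_integrand psi phi x a).
  set (G := L2Rplus_integrand (R_Aff x a psi) phi).
  pose proof (W_Aff_integrand_continuity psi phi x a Hpsi Hphi Ha) as Fcont.
  destruct (W_Aff_integrand_decay psi phi x a Hpsi Hphi Ha) as [C [HC Fdecay]].
  assert (HU : 0 < decay_radius a) by (pose proof (decay_radius_ge_1 a); lra).
  destruct (improper_int_R_of_inverse_square_decay (fun u => fst (F u)) (decay_radius a) C)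
    as [L1 HL1]; [intro u; apply (Fcont u)|exact HU|exact HC|apply Fdecay|].
  destruct (improper_int_R_of_inverse_square_decay (fun u => snd (F u)) (decay_radius a) C)
    as [L2 HL2]; [intro u; apply (Fcont u)|exact HU|exact HC|apply Fdecay|].
  exists (L1, L2). split; [split; assumption|split].
  - apply (improper_int_pos_of_improper_int_R a (fun u => fst (F u)) (fun r => fst (G r)));
      [exact Ha|intro u; apply (Fcont u)| |exact HL1].
    intro u. apply L2Rplus_integrand_R_Aff_lambda, Ha.
  - apply (improper_int_pos_of_improper_int_R a (fun u => snd (F u)) (fun r => snd (G r)));
      [exact Ha|intro u; apply (Fcont u)| |exact HL2].
    intro u. apply L2Rplus_integrand_R_Aff_lambda, Ha.
Qed.
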